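(* Let $\alpha$ be an admissible family of weights with basic coefficients $\nu_{\mathsf q},\xi_{\mathsf q},\nu_{\mathsf q\mathsf Q},\xi_{\mathsf q\mathsf Q}$. Then for all $\mathsf q,\mathsf Q\in\mathcal F$: (1) $\nu_{\mathsf q}^2=\nu_{\mathsf q}$ and $\xi_{\mathsf q}^2=\xi_{\mathsf q}$, i.e. $\nu_{\mathsf q},\xi_{\mathsf q}\in\{0,1\}$; (2) $t\,\nu_{\mathsf q}=t$ for $t\in\{\nu_{\mathsf q\mathsf Q},\xi_{\mathsf q},\xi_{\mathsf q\mathsf Q}\}$, i.e. $\nu_{\mathsf q}=0$ implies $\nu_{\mathsf q\mathsf Q}=\xi_{\mathsf q}=\xi_{\mathsf q\mathsf Q}=0$; (3) $|t|^2t=t$ for $t\in\{\nu_{\mathsf q\mathsf Q},\xi_{\mathsf q\mathsf Q}\}$, i.e. $\nu_{\mathsf q\mathsf Q},\xi_{\mathsf q\mathsf Q}\in\{0\}\cup\mathbb T$; (4) $\nu_{\mathsf q\mathsf Q}\xi_{\mathsf q}=\xi_{\mathsf q\mathsf Q}\xi_{\mathsf q}$, i.e. $\xi_{\mathsf q}=1$ implies $\nu_{\mathsf q\mathsf Q}=\xi_{\mathsf q\mathsf Q}$; (5) $\nu_{\mathsf q\mathsf Q}\xi_{\mathsf q\mathsf Q}=\nu_{\mathsf q\mathsf Q}\xi_{\mathsf q\mathsf Q}\xi_{\mathsf q}$, i.e. $\xi_{\mathsf q}=0$ implies $\nu_{\mathsf q\mathsf Q}=0$ or $\xi_{\mathsf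 q\mathsf Q}=0$.
   Context: Fix a finite set $\mathcal F$ of faces; $\mathbb T$ is the unit circle. For a word $\mathbf f\in\mathcal F^n$ ($n\ge1$), $[n]_{\mathbf f}$ is $\{1,\dots,n\}$ with faces $\ell\mapsto\mathbf f(\ell)$ (legs); $\mathcal P(\mathbf f)$ is the set of set partitions of $[n]$ viewed with these faces, $\mathcal P=\bigcup_{\mathbf f}\mathcal P(\mathbf f)$. A finite totally ordered set $S$ with a face map is identified with $[m]_{|S|}$ through the order-preserving bijection, so partitions of such sets are elements of $\mathcal P$. $1_{\mathbf f}$ is the one-block partition. For blocks $\beta_1\ne\beta_2$ of $\pi$, $\pi_{\beta_1\smile\beta_2}=(\pi\setminus\{\beta_1,\beta_2\})\cup\{\beta_1\cup\beta_2\}$, and $\{\beta_1,\beta_2\}$ is regarded as a partition of the multi-faced set $\beta_1\cup\beta_2$. Reduction: for $\pi\in\mathcal P(\mathbf f)$ let $s\sim t$ ($s\le t$) iff all $r\in[s,t]$ have the same face and lie in the same block; $\pi_{\mathrm{red}}$ is the induced partition of $[n]/\sim$. Mirror: $\overline{\mathbf f}(i)=\mathbf f(n+1-i)$, $\overline\pi=\{\{n+1-i:i\in\beta\}:\beta\in\pi\}$. Admissible: $\alpha=(\alpha_\pi)_{\pi\in\mathcal P}\subset\mathbb C$ with (i) $\alpha_{1_{\mathbf f}}=1$; (ii) $\alpha_{\{\{1\},\{2\}\}}=1$ for every $\mathbf f\in\mathcal F^2$; (iii) $\alpha_\pi=\alpha_{\pi_{\mathrm{red}}}$; (iv) if $\pi\in\mathcal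 P(\mathbf f)$ has blocks $\beta_1\ne\beta_2$ with $i\in\beta_1$, $i+1\in\beta_2$, $\mathbf f(i)=\mathbf f(i+1)$, then $\alpha_\pi=\alpha_{\pi_{\beta_1\smile\beta_2}}\alpha_{\{\beta_1,\beta_2\}}$; (v) $\alpha_\pi=\alpha_\sigma$ whenever $\pi\in\mathcal P(\mathbf f)$, $\sigma\in\mathcal P(\mathbf g)$ have the same set partition and $\mathbf f(\ell)=\mathbf g(\ell)$ for $1<\ell<n$; (vi) $\alpha_{\overline\pi}=\overline{\alpha_\pi}$. Basic coefficients (faces of first and last leg arbitrary, irrelevant by (v)): $\nu_{\mathsf q}=\alpha_\pi$ for $\pi=\{\{1,3\},\{2\}\}$ with $\mathbf f(2)=\mathsf q$; $\xi_{\mathsf q}=\alpha_\pi$ for $\pi=\{\{1,3\},\{2,4\}\}$ with $\mathbf f(2)=\mathbf f(3)=\mathsf q$; $\nu_{\mathsf q\mathsf Q}=\alpha_\pi$ for $\pi=\{\{1,4\},\{2,3\}\}$ with $\mathbf f(2)=\mathsf q$, $\mathbf f(3)=\mathsf Q$; $\xi_{\mathsf q\mathsf Q}=\alpha_\pi$ for $\pi=\{\{1,3\},\{2,4\}\}$ with $\mathbf f(2)=\mathsf q$, $\mathbf f(3)=\mathsf Q$. *)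

From mathcomp Require Import all_boot all_algebra.
From mathcomp Require Import complex.
From mathcomp Require Import Rstruct.
Import GRing.Theory Num.Theory.
Set Implicit Arguments. Unset Strict Implicit. Unset Printing Implicit Defensive.
Local Open Scope ring_scope.

Definition Cplx : Type := (Rdefinitions.R)[i].

Section Admissible.
Variable F : finType.

(* A family of weights: alpha n f P for a word f of length n and a set
   partition P of [n] = 'I_n (0-based legs). Only values on genuine set
   partitions with n >= 1 matter. *)
Definition weights := forall n : nat, {ffun 'I_n -> F} -> {set {set 'I_n}} -> Cplx.

Definition valid_part n (P : {set {set 'I_n}}) := (0 < n)%N && partition P [set: 'I_n].

Definition same_block n (P : {set {set 'I_n}}) (i j : 'I_n) := pblock P i == pblock P j.

(* (Q on [m] with word g) is the reduction of (P on [n] with word f), witnessed by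
   the (necessarily unique) monotone surjection c : [n] -> [n]/~ = [m]. *)
Definition is_reduction n (f : {ffun 'I_n -> F}) (P : {set {set 'I_n}})
    m (g : {ffun 'I_m -> F}) (Q : {set {set 'I_m}}) (c : 'I_n -> 'I_m) :=
  [/\ forall i j : 'I_n, (i <= j)%N -> (c i <= c j)%N,
      forall k : 'I_m, exists i, c i = k,
      forall i j : 'I_n, (i <= j)%N ->
        (c i = c j <-> forall r : 'I_n, (i <= r <= j)%N -> f r = f i /\ same_block P r i),
      forall i, g (c i) = f i
    & Q = [set c @: B | B : {set 'I_n} in P]].

Definition merge_blocks n (P : {set {set 'I_n}}) (B1 B2 : {set 'I_n}) :=
  (P :\ B1 :\ B2) :|: [set B1 :|: B2].

Definition admissible (alpha : weights) : Prop :=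
  [/\ forall n (f : {ffun 'I_n.+1 -> F}), alpha n.+1 f [set [set: 'I_n.+1]] = 1,
      forall f : {ffun 'I_2 -> F},
        alpha 2 f [set [set (@ord0 1)]; [set (@ord_max 1)]] = 1,
      forall n (f : {ffun 'I_n -> F}) P, valid_part P ->
        forall m g Q (c : 'I_n -> 'I_m), is_reduction f P g Q c -> alpha n f P = alpha m g Q,
      forall n (f : {ffun 'I_n -> F}) P (B1 B2 : {set 'I_n}) (i j : 'I_n), valid_part P ->
        B1 \in P -> B2 \in P -> B1 != B2 -> i \in B1 -> j \in B2 -> val j = (val i).+1 ->
        f i = f j ->
        forall m (e : 'I_m -> 'I_n), (forall k l : 'I_m, (k < l)%N -> (e k < e l)%N) ->
          [set e k | k : 'I_m] = B1 :|: B2 ->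
          alpha n f P = alpha n f (merge_blocks P B1 B2) *
                        alpha m [ffun k => f (e k)] [set e @^-1: B1; e @^-1: B2]
    & (forall n (f g : {ffun 'I_n -> F}) P, valid_part P ->
        (forall l : 'I_n, (0 < l < n.-1)%N -> f l = g l) -> alpha n f P = alpha n g P)
    /\ (forall n (f : {ffun 'I_n -> F}) P, valid_part P ->
        alpha n [ffun i => f (@rev_ord n i)] [set (@rev_ord n) @: B | B : {set 'I_n} in P]
        = (alpha n f P)^*)].

(* Basic coefficients (legs 0-based; first and last faces chosen arbitrarily). *)
Definition o3 (k : nat) : 'I_3 := inord k.
Definition o4 (k : nat) : 'I_4 := inord k.
Definition word4 (q Q : F) : {ffun 'I_4 -> F} := [ffun i : 'I_4 => if (i < 2)%N then q else Q].

Definition nu1 (alpha : weights) (q : F) : Cplx :=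
  alpha 3 [ffun _ => q] [set [set o3 0; o3 2]; [set o3 1]].
Definition xi1 (alpha : weights) (q : F) : Cplx :=
  alpha 4 [ffun _ => q] [set [set o4 0; o4 2]; [set o4 1; o4 3]].
Definition nu2 (alpha : weights) (q Q : F) : Cplx :=
  alpha 4 (word4 q Q) [set [set o4 0; o4 3]; [set o4 1; o4 2]].
Definition xi2 (alpha : weights) (q Q : F) : Cplx :=
  alpha 4 (word4 q Q) [set [set o4 0; o4 2]; [set o4 1; o4 3]].

End Admissible.

From mathcomp Require Import all_boot all_algebra.
From mathcomp Require Import complex.
From mathcomp Require Import Rstruct.
Import GRing.Theory Num.Theory.

(* Each relation comes from evaluating the weight of one partition with five
   or six legs in two ways.  Both times two blocks meeting at neighbouring legs
   of the same face are split off by (iv), and the two factors are brought to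
   a normal form by the reduction (iii) and the freedom (v) in the outer faces;
   a pair of singletons contributes 1 by (ii).  For instance {{1,4},{2},{3}}
   gives nu_q * nu_q and nu_q * 1.  The mirror axiom (vi) turns the weights of
   the mirrored partitions into complex conjugates, which yields the moduli in
   (3).  When q = Q all faces coincide and the mixed coefficients collapse to
   nu_q and xi_q. *)

Section LabelPartition.
Variable n : nat.
Implicit Types (ls : seq nat) (x y z : 'I_n).

Definition label_block ls x : {set 'I_n} := [set y : 'I_n | nth 0 ls x == nth 0 ls y].

Definition label_part ls : {set {set 'I_n}} :=
  preim_partition (fun x : 'I_n => nth 0 ls x) [set: 'I_n].

Lemma label_part_valid ls : (0 < n)%N -> valid_part (label_part ls).
Proof. by move=> n_gt0; rewrite /valid_part n_gt0 preim_partitionP. Qed.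

Lemma label_partP ls B :
  reflect (exists x, B = label_block ls x) (B \in label_part ls).
Proof.
apply: (iffP imsetP) => [[x _ ->]|[x ->]]; exists x => //;
  by apply/setP => y; rewrite !inE.
Qed.

Lemma label_block_in ls x : label_block ls x \in label_part ls.
Proof. by apply/label_partP; exists x. Qed.

Lemma same_block_label_part ls x y :
  same_block (label_part ls) x y = (nth 0 ls x == nth 0 ls y).
Proof.
have /and3P[/eqP cover_all triv _] := preim_partitionP (fun x : 'I_n => nth 0 ls x) [set: 'I_n].
rewrite /same_block eq_pblock ?cover_all ?inE //.
rewrite (@pblock_equivalence_partition _ _ _ _) ?inE //.
by move=> u v w _ _ _; split=> // /eqP ->.
Qed.

Lemma label_part_eqP ls (S : {set {set 'I_n}}) :
  (forall x, label_block ls x \in S) ->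
  (forall B, B \in S -> exists x, B = label_block ls x) ->
  label_part ls = S.
Proof.
move=> blocksS Sblocks; apply/setP => B.
by apply/label_partP/idP => [[x ->]|/Sblocks //]; apply: blocksS.
Qed.

Lemma label_part_relabel ls ls' :
  (forall x y, (nth 0 ls' x == nth 0 ls' y) = (nth 0 ls x == nth 0 ls y)) ->
  label_part ls = label_part ls'.
Proof.
move=> same; apply: label_part_eqP => [x|B /label_partP[x ->]].
  by rewrite (_ : label_block ls x = label_block ls' x) ?label_block_in //;
     apply/setP => y; rewrite !inE same.
by exists x; apply/setP => y; rewrite !inE same.
Qed.

Lemma label_part_two_blocks ls x y B1 B2 :
  B1 = label_block ls x -> B2 = label_block ls y ->
  (forall z, nth 0 ls z \in [:: nth 0 ls x; nth 0 ls y]) ->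
  label_part ls = [set B1; B2].
Proof.
move=> -> -> two; apply: label_part_eqP => [z|B]; last first.
  by rewrite !inE => /orP[] /eqP ->; [exists x | exists y].
have := two z; rewrite !inE => /orP[] /eqP zl; apply/orP; [left|right];
  by apply/eqP/setP => u; rewrite !inE zl.
Qed.

Lemma label_block_union ls x0 y0 y :
  (y \in label_block ls x0 :|: label_block ls y0) =
  (nth 0 ls y \in [:: nth 0 ls x0; nth 0 ls y0]).
Proof. by rewrite !inE ![_ == nth 0 ls y]eq_sym. Qed.

Lemma merge_label_blocks ls ls' x0 y0 :
  let U := label_block ls x0 :|: label_block ls y0 in
  nth 0 ls x0 != nth 0 ls y0 ->
  (forall y z, (nth 0 ls' y == nth 0 ls' z) =
               (nth 0 ls y == nth 0 ls z) || (y \in U) && (z \in U)) ->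
  merge_blocks (label_part ls) (label_block ls x0) (label_block ls y0) = label_part ls'.
Proof.
move=> U ab merged.
have U_closed x y : nth 0 ls x == nth 0 ls y -> (x \in U) = (y \in U).
  by move/eqP => xy; rewrite !label_block_union xy.
have blockU x : x \in U -> label_block ls' x = U.
  move=> xU; apply/setP => y; rewrite inE merged xU andTb.
  by case: eqP => //= /eqP /U_closed <-.
have block_out x : x \notin U -> label_block ls' x = label_block ls x.
  by move/negbTE => xU; apply/setP => y; rewrite !inE merged xU orbF.
have x_block x : x \in label_block ls x by rewrite inE.
apply/esym/label_part_eqP => [x|B].
  rewrite /merge_blocks !inE; have [xU|xU] := boolP (x \in U).
    by rewrite blockU // eqxx orbT.
  rewrite block_out // label_block_in andbT; apply/orP; left.
  by apply/andP; split; apply: contraNneq xU => xB; rewrite /U inE -xB x_block ?orbT.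
rewrite /merge_blocks !inE => /orP[/and3P[B_ne2 B_ne1 /label_partP[x defB]]|/eqP ->].
  exists x; rewrite defB block_out //.
  by apply/negP; rewrite /U !inE => /orP[] /eqP xl;
     [move: B_ne1 | move: B_ne2]; rewrite defB; case/eqP; apply/setP => y; rewrite !inE xl.
by exists x0; rewrite blockU // /U inE x_block.
Qed.

End LabelPartition.

Arguments label_block {n} ls x.

Lemma imset_label_part n m ls ls' (c : 'I_n -> 'I_m) :
  (forall k, exists i, c i = k) ->
  (forall i j, (nth 0 ls' (c i) == nth 0 ls' (c j)) = (nth 0 ls i == nth 0 ls j)) ->
  [set c @: B | B : {set 'I_n} in label_part n ls] = label_part m ls'.
Proof.
move=> c_onto c_labels.
have c_block x : c @: label_block ls x = label_block ls' (c x).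
  apply/setP => y; apply/imsetP/idP => [[z]|]; rewrite !inE.
    by move=> xz ->; rewrite c_labels.
  by have [z <-] := c_onto y; exists z; rewrite // inE -c_labels.
apply/esym/label_part_eqP => [k|B /imsetP[B0 /label_partP[x ->] ->]].
  have [x <-] := c_onto k; rewrite -c_block.
  by apply/imsetP; exists (label_block ls x); rewrite ?label_block_in.
by exists (c x); rewrite c_block.
Qed.

Lemma preimage_label_blocks n m ls ls' x0 y0 (e : 'I_m -> 'I_n) :
  (forall k : 'I_m, nth 0 ls' k = nth 0 ls (e k)) ->
  (forall k : 'I_m, e k \in label_block ls x0 :|: label_block ls y0) ->
  x0 \in codom e -> y0 \in codom e ->
  [set e @^-1: label_block ls x0; e @^-1: label_block ls y0] = label_part m ls'.
Proof.
move=> labels_e e_in /codomP[k1 x0E] /codomP[k2 y0E]; subst x0 y0.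
have preim k : e @^-1: label_block ls (e k) = label_block ls' k.
  by apply/setP => y; rewrite !inE !labels_e.
rewrite !preim; apply/esym/label_part_eqP => [k|B]; last first.
  by rewrite !inE => /orP[] /eqP ->; [exists k1 | exists k2].
have := e_in k; rewrite !inE => /orP[] /eqP kl; apply/orP; [left|right]; apply/eqP;
  by apply/setP => y; rewrite !inE !labels_e kl.
Qed.

Lemma ord_in_iota {n} (i : 'I_n) : val i \in iota 0 n.
Proof. by rewrite mem_iota leq0n add0n ltn_ord. Qed.

Lemma filter_iota_enum n (P : pred nat) (x0 : 'I_n) :
  let idx := [seq k <- iota 0 n | P k] in
  exists e : 'I_(size idx) -> 'I_n,
    [/\ forall k, val (e k) = nth 0 idx k,
        forall k l : 'I_(size idx), (k < l)%N -> (e k < e l)%N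
      & [set e k | k : 'I_(size idx)] = [set y : 'I_n | P y]].
Proof.
move=> idx; have idx_lt k : (k < size idx)%N -> (nth 0 idx k < n)%N.
  by move=> k_lt; have := mem_nth 0 k_lt; rewrite mem_filter mem_iota => /and3P[].
exists (fun k => insubd x0 (nth 0 idx k)).
have eE (k : 'I_(size idx)) : val (insubd x0 (nth 0 idx k)) = nth 0 idx k.
  by rewrite val_insubd idx_lt.
split=> // [k l kl|].
  rewrite !eE; apply: (sorted_ltn_nth ltn_trans) => //; rewrite ?inE ?ltn_ord //.
  by apply: sorted_filter; [exact: ltn_trans | exact: iota_ltn_sorted].
apply/setP => y; rewrite inE; apply/imsetP/idP => [[k _ ->]|Py].
  by have := mem_nth 0 (ltn_ord k); rewrite mem_filter eE => /andP[].
have y_idx : val y \in idx by rewrite mem_filter Py ord_in_iota.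
have y_lt : (index (val y) idx < size idx)%N by rewrite index_mem.
by exists (Ordinal y_lt) => //; apply: val_inj; rewrite eE nth_index.
Qed.

Lemma inord_eqE n (x : 'I_n.+1) k : (k <= n)%N -> (x == inord k) = (val x == k).
Proof. by move=> k_le; rewrite -val_eqE /= inordK. Qed.

Ltac case_ord i := case: i => [[|[|[|[|?]]]] //= ?].

Lemma label_part_010 : label_part 3 [:: 0; 1; 0] = [set [set o3 0; o3 2]; [set o3 1]].
Proof.
apply: (label_part_two_blocks _ _ ord0 (inord 1)) => [||z]; try apply/setP => z;
  by case_ord z; rewrite !inE ?inord_eqE ?inordK.
Qed.

Lemma label_part_0101 :
  label_part 4 [:: 0; 1; 0; 1] = [set [set o4 0; o4 2]; [set o4 1; o4 3]].
Proof.
apply: (label_part_two_blocks _ _ ord0 (inord 1)) => [||z]; try apply/setP => z;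
  by case_ord z; rewrite !inE ?inord_eqE ?inordK.
Qed.

Lemma label_part_0110 :
  label_part 4 [:: 0; 1; 1; 0] = [set [set o4 0; o4 3]; [set o4 1; o4 2]].
Proof.
apply: (label_part_two_blocks _ _ ord0 (inord 1)) => [||z]; try apply/setP => z;
  by case_ord z; rewrite !inE ?inord_eqE ?inordK.
Qed.

Lemma idem_sqr_norm_mul (R : numDomainType) (x : R) : (x * x = x -> `|x| ^+ 2 * x = x)%R.
Proof.
move=> idem; have [->|x_neq0] := eqVneq x 0%R; first by rewrite mulr0.
have -> : x = 1%R by apply: (mulIf x_neq0); rewrite mul1r.
by rewrite normr1 expr1n mul1r.
Qed.

Section Weights.
Variables (F : finType) (alpha : weights F) (q Q : F).
Hypothesis alpha_adm : admissible alpha.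

(* A partition is given by the sequence of block labels of its legs and a word
   by booleans, [true] standing for the face Q, so that the side conditions of
   the axioms become computations on concrete data. *)
Definition letter (b : bool) : F := if b then Q else q.

Definition word (w : seq bool) n : {ffun 'I_n -> F} :=
  [ffun i : 'I_n => letter (nth false w i)].

Definition weight (w : seq bool) (ls : seq nat) : Cplx :=
  alpha (size ls) (word w (size ls)) (label_part (size ls) ls).

(* [e] stands for the undecided boolean [q == Q]; letters of equal booleans
   compare equal by evaluation whatever [e] is. *)
Definition same_letter (e b1 b2 : bool) := (b1 == b2) || e.

Lemma letter_eqE {e} : (q == Q) = e ->
  forall b1 b2, (letter b1 == letter b2) = same_letter e b1 b2.
Proof. by move=> <- b1 b2; case: b1; case: b2; rewrite /same_letter /= ?eqxx // eq_sym. Qed.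

Lemma weight_pair w : weight w [:: 0; 1] = 1%R.
Proof.
have [_ pair1 _ _ _] := alpha_adm; rewrite /weight -(pair1 (word w 2)).
congr (alpha 2 _ _); apply: label_part_eqP => [x|B].
  rewrite !inE; apply/orP; case_ord x; [left|right];
    by apply/eqP/setP => y; case_ord y; rewrite !inE.
by rewrite !inE => /orP[] /eqP ->; [exists ord0 | exists ord_max];
   apply/setP => y; case_ord y; rewrite !inE.
Qed.

Lemma weight_word_irrelevant w w' ls : q = Q -> weight w ls = weight w' ls.
Proof.
by move=> qQ; rewrite /weight; congr (alpha _ _ _); apply/ffunP => i;
   rewrite !ffunE /letter -qQ !if_same.
Qed.

(* [undup] keeps last occurrences, hence the reversals: blocks are numbered
   0, 1, ... in order of first appearance. *)
Definition canonical_labels (ls : seq nat) :=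
  [seq index l (rev (undup (rev ls))) | l <- ls].

Lemma weight_canonical_labels w ls : weight w (canonical_labels ls) = weight w ls.
Proof.
rewrite /weight size_map; congr (alpha _ _ _); apply/esym/label_part_relabel => x y.
rewrite !(nth_map 0) ?ltn_ord //; apply/eqP/eqP => [|-> //].
by move=> eq_idx; apply: (index_inj 0 _ _ eq_idx); rewrite mem_rev mem_undup mem_rev mem_nth.
Qed.

(* The outer faces are free by (v); copying the neighbouring faces lets the
   reduction absorb an outer leg whenever its block allows it. *)
Definition trim n (w : seq bool) :=
  [seq nth false w (minn (maxn i 1) n.-2) | i <- iota 0 n].

Lemma weight_trim w ls : weight (trim (size ls) w) ls = weight w ls.
Proof.
rewrite /weight; case: (posnP (size ls)) => [-> | n_gt0].
  by congr (alpha 0 _ _); apply/ffunP => -[].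
have [_ _ _ _ [ends _]] := alpha_adm; apply: ends; first exact: label_part_valid.
move=> l /andP[l_gt0 l_lt]; rewrite !ffunE (nth_map 0) ?size_iota ?ltn_ord //.
rewrite nth_iota ?ltn_ord // add0n (maxn_idPl l_gt0) (minn_idPl _) //.
by rewrite -ltnS (ltn_predK l_lt).
Qed.

Lemma weight_rev w ls :
  size w = size ls -> (0 < size ls)%N -> weight (rev w) (rev ls) = (weight w ls)^*%R.
Proof.
move=> size_w n_gt0; have [_ _ _ _ [_ mirror]] := alpha_adm.
rewrite /weight size_rev -mirror ?label_part_valid //; congr (alpha _ _ _).
  by apply/ffunP => i; rewrite !ffunE nth_rev size_w ?ltn_ord.
apply/esym/imset_label_part => [k|i j]; first by exists (rev_ord k); rewrite rev_ordK.
by rewrite /= !nth_rev ?rev_ord_proof // !subnSK ?ltn_ord // !subKn // ltnW.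
Qed.

Definition merge_labels (ls : seq nat) i :=
  [seq if l == nth 0 ls i.+1 then nth 0 ls i else l | l <- ls].

Definition merged_legs (ls : seq nat) i :=
  [seq k <- iota 0 (size ls) | nth 0 ls k \in [:: nth 0 ls i; nth 0 ls i.+1]].

Lemma merge_labels_eq (a b x y : nat) : a != b ->
  ((if x == b then a else x) == (if y == b then a else y)) =
  (x == y) || (x \in [:: a; b]) && (y \in [:: a; b]).
Proof.
move=> ab; rewrite !inE.
have [->|xb] := eqVneq x b; have [->|yb] := eqVneq y b; rewrite ?eqxx ?orbT ?orbF //=.
- by rewrite (negbTE xb) andbT.
- by have [->|] := eqVneq x a; rewrite /= ?andbF ?orbF // (eq_sym y) orbb.
Qed.

Lemma weight_merge {w ls i} :
  (i.+1 < size ls)%N -> nth 0 ls i != nth 0 ls i.+1 -> nth false w i = nth false w i.+1 ->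
  weight w ls = (weight w (merge_labels ls i) *
                 weight [seq nth false w k | k <- merged_legs ls i]
                        [seq nth 0 ls k | k <- merged_legs ls i])%R.
Proof.
move=> i_lt ab wi; have [_ _ _ merge _] := alpha_adm.
rewrite /weight !size_map; set n := size ls.
have iN : (i < n)%N := ltnW i_lt.
have n_gt0 : (0 < n)%N := leq_ltn_trans (leq0n i) iN.
pose i0 : 'I_n := Ordinal iN; pose j0 : 'I_n := Ordinal i_lt.
pose B1 := label_block ls i0; pose B2 := label_block ls j0.
have [e [eE e_mono e_img]] :=
  filter_iota_enum n (fun k => nth 0 ls k \in [:: nth 0 ls i; nth 0 ls i.+1]) i0.
have {}e_img : [set e k | k in 'I_(size (merged_legs ls i))] = B1 :|: B2.
  by rewrite e_img; apply/setP => y; rewrite inE label_block_union.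
have in_codom y : y \in B1 :|: B2 -> y \in codom e.
  by rewrite -e_img => /imsetP[k _ ->]; apply: codom_f.
have B12 : B1 != B2.
  apply: contra_neq ab => B12; have : j0 \in B1 by rewrite B12 inE.
  by rewrite inE => /eqP.
rewrite (merge n (word w n) (label_part n ls) B1 B2 i0 j0 _ _ _ B12 _ _ erefl _ _ e e_mono e_img)
  ?label_part_valid ?label_block_in ?inE ?ffunE ?wi //.
set m := size (merged_legs ls i); congr (alpha n _ _ * alpha m _ _)%R.
- apply: merge_label_blocks => // y z.
  by rewrite !(nth_map 0) ?ltn_ord // merge_labels_eq // !label_block_union.
- by apply/ffunP => k; rewrite !ffunE (nth_map 0) ?eE.
- apply: preimage_label_blocks => // [k|k||]; first by rewrite (nth_map 0) ?eE.
  + by rewrite -e_img imset_f.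
  all: by apply: in_codom; rewrite !inE eqxx ?orbT.
Qed.

Definition fuses e (w : seq bool) (ls : seq nat) r :=
  same_letter e (nth false w r) (nth false w r.-1) && (nth 0 ls r == nth 0 ls r.-1).

Definition block_starts e w ls :=
  [seq (r == 0) || ~~ fuses e w ls r | r <- iota 0 (size ls)].

Definition reduce_labels e w ls := mask (block_starts e w ls) ls.
Definition reduce_word e w ls := mask (block_starts e w ls) w.
Definition reduce_map e w ls r := (count id (take r.+1 (block_starts e w ls))).-1.

(* The reduction of (iii) that fuses maximal runs of legs with equal faces and
   labels; [reduction_ok] certifies it by evaluation, one concrete partition at
   a time. *)
Definition reduction_ok e w ls :=
  let ls' := reduce_labels e w ls in let w' := reduce_word e w ls in
  let c := reduce_map e w ls in let legs := iota 0 (size ls) in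
  [&& (0 < size ls)%N && all (fun r => c r < size ls')%N legs,
      all (fun k => has (fun r => c r == k) legs) (iota 0 (size ls')),
      all (fun r => same_letter e (nth false w' (c r)) (nth false w r)) legs,
      all (fun r => all (fun s =>
        (nth 0 ls' (c r) == nth 0 ls' (c s)) == (nth 0 ls r == nth 0 ls s)) legs) legs &
      all (fun r => all (fun s => (r <= s)%N ==> (c r <= c s)%N &&
        ((c r == c s) == all (fun t => (r <= t <= s)%N ==>
           same_letter e (nth false w t) (nth false w r) && (nth 0 ls t == nth 0 ls r)) legs))
        legs) legs].

Lemma weight_reduce {e} (qQe : (q == Q) = e) w ls : reduction_ok e w ls ->
  weight w ls = weight (reduce_word e w ls) (reduce_labels e w ls).
Proof.
move=> ok; have [_ _ red _ _] := alpha_adm; rewrite /weight.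
set n := size ls; set ls' := reduce_labels e w ls; set m := size ls'.
set w' := reduce_word e w ls; set c0 := reduce_map e w ls.
move: ok; rewrite /reduction_ok -/n -/ls' -/m -/w' -/c0.
move=> /and5P[/andP[n_gt0 c_lt] c_onto c_word c_labels c_runs].
have cP (i : 'I_n) : (c0 i < m)%N := allP c_lt _ (ord_in_iota i).
pose c (i : 'I_n) : 'I_m := Ordinal (cP i).
have c_ontoP k : exists i, c i = k.
  case/hasP: (allP c_onto _ (ord_in_iota k)) => i.
  rewrite mem_iota add0n => /andP[_ i_lt] /eqP ck.
  by exists (Ordinal i_lt); apply: val_inj.
have runs (i j : 'I_n) : (i <= j)%N -> (c0 i <= c0 j)%N &&
    ((c0 i == c0 j) == all (fun t => (i <= t <= j)%N ==>
       same_letter e (nth false w t) (nth false w i) && (nth 0 ls t == nth 0 ls i)) (iota 0 n)).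
  by move=> ij; have := allP (allP c_runs _ (ord_in_iota i)) _ (ord_in_iota j); rewrite ij.
apply: (red n (word w n) (label_part n ls) (label_part_valid _ _ n_gt0) m _ _ c); split.
- by move=> i j /runs/andP[].
- exact: c_ontoP.
- move=> i j /runs/andP[_ /eqP runs_ij]; split.
    move/(congr1 val)/eqP; rewrite /= runs_ij => /allP run r /andP[ir rj].
    case/andP: (implyP (run r (ord_in_iota r)) (introT andP (conj ir rj))) => letter_r label_r.
    by rewrite same_block_label_part !ffunE; split; [apply/eqP; rewrite (letter_eqE qQe) | ].
  move=> run; apply/val_inj/eqP; rewrite /= runs_ij; apply/allP => t.
  rewrite mem_iota add0n => /andP[_ t_lt]; apply/implyP => /andP[it tj].
  have [letter_t] := run (Ordinal t_lt) (introT andP (conj it tj)).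
  rewrite same_block_label_part => ->; rewrite andbT -(letter_eqE qQe).
  by move: letter_t; rewrite !ffunE => ->.
- move=> i; rewrite !ffunE; apply/eqP.
  by rewrite (letter_eqE qQe) (allP c_word _ (ord_in_iota i)).
- apply/esym/imset_label_part => // i j.
  exact: eqP (allP (allP c_labels _ (ord_in_iota i)) _ (ord_in_iota j)).
Qed.

Fixpoint normalize e k w ls : seq bool * seq nat :=
  let w := trim (size ls) w in
  if k is k'.+1 then normalize e k' (reduce_word e w ls) (reduce_labels e w ls)
  else (w, canonical_labels ls).

Fixpoint normalizable e k w ls : bool :=
  let w := trim (size ls) w in
  if k is k'.+1 then
    reduction_ok e w ls && normalizable e k' (reduce_word e w ls) (reduce_labels e w ls)
  else true.

Lemma weight_normalize {e} (qQe : (q == Q) = e) k w ls : normalizable e k w ls ->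
  weight w ls = weight (normalize e k w ls).1 (normalize e k w ls).2.
Proof.
elim: k w ls => [|k IH] w ls /=; first by rewrite weight_canonical_labels weight_trim.
by case/andP => ok norm; rewrite -IH // -weight_reduce // weight_trim.
Qed.

Definition has_normal_form e w ls w' ls' :=
  normalizable e (size ls) w ls && (normalize e (size ls) w ls == (w', ls')).

Lemma weight_normal_form {e} (qQe : (q == Q) = e) {w ls w' ls'} :
  has_normal_form e w ls w' ls' -> weight w ls = weight w' ls'.
Proof. by move=> /andP[norm /eqP nf]; rewrite (weight_normalize qQe _ _ _ norm) nf. Qed.

Definition splits_into e i w ls w1 ls1 w2 ls2 :=
  let legs := merged_legs ls i in
  [&& (i.+1 < size ls)%N, nth 0 ls i != nth 0 ls i.+1, nth false w i == nth false w i.+1,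
      has_normal_form e w (merge_labels ls i) w1 ls1 &
      has_normal_form e [seq nth false w k | k <- legs] [seq nth 0 ls k | k <- legs] w2 ls2].

Lemma weight_split {e} (qQe : (q == Q) = e) i {w ls w1 ls1 w2 ls2} :
  splits_into e i w ls w1 ls1 w2 ls2 -> weight w ls = (weight w1 ls1 * weight w2 ls2)%R.
Proof.
move=> /and5P[i_lt ab /eqP wi nf1 nf2].
by rewrite (weight_merge i_lt ab wi) (weight_normal_form qQe nf1) (weight_normal_form qQe nf2).
Qed.

Local Notation q_ := false (only parsing).
Local Notation Q_ := true (only parsing).

Definition nu_q := weight [:: q_; q_; q_] [:: 0; 1; 0].
Definition xi_q := weight [:: q_; q_; q_; q_] [:: 0; 1; 0; 1].
Definition nu_qQ := weight [:: q_; q_; Q_; Q_] [:: 0; 1; 1; 0].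
Definition xi_qQ := weight [:: q_; q_; Q_; Q_] [:: 0; 1; 0; 1].

Lemma nu1E : nu1 alpha q = nu_q.
Proof.
rewrite /nu1 /nu_q /weight label_part_010; congr (alpha 3 _ _).
by apply/ffunP => i; rewrite !ffunE; case_ord i.
Qed.

Lemma xi1E : xi1 alpha q = xi_q.
Proof.
rewrite /xi1 /xi_q /weight label_part_0101; congr (alpha 4 _ _).
by apply/ffunP => i; rewrite !ffunE; case_ord i.
Qed.

Lemma nu2E : nu2 alpha q Q = nu_qQ.
Proof.
rewrite /nu2 /nu_qQ /weight label_part_0110; congr (alpha 4 _ _).
by apply/ffunP => i; rewrite !ffunE; case_ord i.
Qed.

Lemma xi2E : xi2 alpha q Q = xi_qQ.
Proof.
rewrite /xi2 /xi_qQ /weight label_part_0101; congr (alpha 4 _ _).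
by apply/ffunP => i; rewrite !ffunE; case_ord i.
Qed.

Local Open Scope ring_scope.

Definition basic_relations (nu xi nu' xi' : Cplx) : Prop :=
  [/\ nu ^+ 2 = nu /\ xi ^+ 2 = xi,
      [/\ nu' * nu = nu', xi * nu = xi & xi' * nu = xi'],
      `|nu'| ^+ 2 * nu' = nu' /\ `|xi'| ^+ 2 * xi' = xi',
      nu' * xi = xi' * xi
    & nu' * xi' = nu' * xi' * xi].

Lemma nu_q_idem : nu_q * nu_q = nu_q.
Proof.
have at0 : weight [:: q_; q_; q_; q_] [:: 0; 1; 2; 0] = nu_q * nu_q.
  by apply: (weight_split (erefl _) 0).
have at1 : weight [:: q_; q_; q_; q_] [:: 0; 1; 2; 0] = nu_q * weight [:: q_; q_] [:: 0; 1].
  by apply: (weight_split (erefl _) 1).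
by rewrite -at0 at1 weight_pair mulr1.
Qed.

Lemma nu_q_xi_q : nu_q * xi_q = xi_q.
Proof.
have at0 : weight [:: q_; q_; q_; q_; q_] [:: 0; 1; 0; 2; 1] = nu_q * xi_q.
  by apply: (weight_split (erefl _) 0).
have at2 : weight [:: q_; q_; q_; q_; q_] [:: 0; 1; 0; 2; 1] =
    xi_q * weight [:: q_; q_] [:: 0; 1].
  by apply: (weight_split (erefl _) 2).
by rewrite -at0 at2 weight_pair mulr1.
Qed.

Lemma xi_q_idem : xi_q * xi_q = xi_q.
Proof.
have at2 : weight [:: q_; q_; q_; q_; q_; q_] [:: 0; 1; 2; 0; 2; 1] = xi_q * xi_q.
  by apply: (weight_split (erefl _) 2).
have at1 : weight [:: q_; q_; q_; q_; q_; q_] [:: 0; 1; 2; 0; 2; 1] = xi_q * nu_q.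
  by apply: (weight_split (erefl _) 1).
by rewrite -at2 at1 mulrC nu_q_xi_q.
Qed.

Section DistinctFaces.
Hypothesis qQ : q != Q.

Lemma nu_qQ_nu_q : nu_qQ * nu_q = nu_qQ.
Proof.
have at0 : weight [:: q_; q_; q_; Q_; q_] [:: 0; 1; 2; 2; 0] = nu_qQ * nu_q.
  by apply: (weight_split (negbTE qQ) 0).
have at1 : weight [:: q_; q_; q_; Q_; q_] [:: 0; 1; 2; 2; 0] =
    nu_qQ * weight [:: q_; q_] [:: 0; 1].
  by apply: (weight_split (negbTE qQ) 1).
by rewrite -at0 at1 weight_pair mulr1.
Qed.

Lemma xi_qQ_nu_q : xi_qQ * nu_q = xi_qQ.
Proof.
have at0 : weight [:: q_; q_; q_; Q_; q_] [:: 0; 1; 2; 0; 2] = xi_qQ * nu_q.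
  by apply: (weight_split (negbTE qQ) 0).
have at1 : weight [:: q_; q_; q_; Q_; q_] [:: 0; 1; 2; 0; 2] =
    xi_qQ * weight [:: q_; q_] [:: 0; 1].
  by apply: (weight_split (negbTE qQ) 1).
by rewrite -at0 at1 weight_pair mulr1.
Qed.

Lemma conj_nu_qQ : nu_qQ^* = weight [:: Q_; Q_; q_; q_] [:: 0; 1; 1; 0].
Proof. by rewrite -weight_rev. Qed.

Lemma conj_xi_qQ : xi_qQ^* = weight [:: Q_; Q_; q_; q_] [:: 0; 1; 0; 1].
Proof. by rewrite -weight_rev // -weight_canonical_labels. Qed.

Lemma nu_qQ_unitary : nu_qQ^* * nu_qQ * nu_qQ = nu_qQ.
Proof.
have at0 : weight [:: q_; q_; Q_; Q_; q_; q_] [:: 0; 1; 1; 2; 2; 0] =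
    weight [:: Q_; Q_; q_; q_] [:: 0; 1; 1; 0] * nu_qQ.
  by apply: (weight_split (negbTE qQ) 0).
have at2 : weight [:: q_; q_; Q_; Q_; q_; q_] [:: 0; 1; 1; 2; 2; 0] =
    weight [:: q_; q_; Q_; q_; q_] [:: 0; 1; 1; 1; 0] * weight [:: Q_; Q_] [:: 0; 1].
  by apply: (weight_split (negbTE qQ) 2).
have at1' : weight [:: q_; q_; q_; Q_; q_; q_] [:: 0; 1; 2; 2; 1; 0] =
    weight [:: q_; q_; Q_; q_; q_] [:: 0; 1; 1; 1; 0] * nu_qQ.
  by apply: (weight_split (negbTE qQ) 1).
have at0' : weight [:: q_; q_; q_; Q_; q_; q_] [:: 0; 1; 2; 2; 1; 0] = nu_qQ * nu_q.
  by apply: (weight_split (negbTE qQ) 0).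
by rewrite conj_nu_qQ -at0 at2 weight_pair mulr1 -at1' at0' nu_qQ_nu_q.
Qed.

Lemma xi_qQ_unitary : xi_qQ^* * xi_qQ * xi_qQ = xi_qQ.
Proof.
have at0 : weight [:: q_; q_; Q_; Q_; q_; q_] [:: 0; 1; 0; 2; 1; 2] =
    weight [:: Q_; Q_; q_; q_] [:: 0; 1; 0; 1] * xi_qQ.
  by apply: (weight_split (negbTE qQ) 0).
have at2 : weight [:: q_; q_; Q_; Q_; q_; q_] [:: 0; 1; 0; 2; 1; 2] =
    weight [:: q_; q_; Q_; q_; q_] [:: 0; 1; 0; 1; 0] * weight [:: Q_; Q_] [:: 0; 1].
  by apply: (weight_split (negbTE qQ) 2).
have at0' : weight [:: q_; q_; q_; Q_; q_; q_] [:: 0; 1; 2; 0; 2; 1] =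
    weight [:: q_; q_; Q_; q_; q_] [:: 0; 1; 0; 1; 0] * xi_qQ.
  by apply: (weight_split (negbTE qQ) 0).
have at1' : weight [:: q_; q_; q_; Q_; q_; q_] [:: 0; 1; 2; 0; 2; 1] = xi_qQ * nu_q.
  by apply: (weight_split (negbTE qQ) 1).
by rewrite conj_xi_qQ -at0 at2 weight_pair mulr1 -at0' at1' xi_qQ_nu_q.
Qed.

Lemma nu_qQ_xi_q : nu_qQ * xi_q = xi_qQ * xi_q.
Proof.
have at1 : weight [:: q_; q_; q_; q_; Q_; q_] [:: 0; 1; 2; 0; 2; 1] = xi_q * nu_qQ.
  by apply: (weight_split (negbTE qQ) 1).
have at0 : weight [:: q_; q_; q_; q_; Q_; q_] [:: 0; 1; 2; 0; 2; 1] =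
    weight [:: q_; q_; q_; Q_; Q_] [:: 0; 1; 0; 1; 0] * xi_q.
  by apply: (weight_split (negbTE qQ) 0).
have at2' : weight [:: q_; q_; q_; q_; Q_; q_] [:: 0; 1; 2; 0; 1; 2] =
    weight [:: q_; q_; q_; Q_; Q_] [:: 0; 1; 0; 1; 0] * xi_q.
  by apply: (weight_split (negbTE qQ) 2).
have at1' : weight [:: q_; q_; q_; q_; Q_; q_] [:: 0; 1; 2; 0; 1; 2] = xi_q * xi_qQ.
  by apply: (weight_split (negbTE qQ) 1).
by rewrite mulrC -at1 at0 -at2' at1' mulrC.
Qed.

Lemma nu_qQ_xi_qQ : nu_qQ * xi_qQ = nu_qQ * xi_qQ * xi_q.
Proof.
have at1 : weight [:: q_; q_; q_; Q_; Q_; q_] [:: 0; 1; 2; 0; 2; 1] = xi_qQ * nu_qQ.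
  by apply: (weight_split (negbTE qQ) 1).
have at3 : weight [:: q_; q_; q_; Q_; Q_; q_] [:: 0; 1; 2; 0; 2; 1] =
    weight [:: q_; q_; q_; Q_; Q_] [:: 0; 1; 0; 0; 1] * xi_qQ.
  by apply: (weight_split (negbTE qQ) 3).
have at0' : weight [:: q_; q_; q_; q_; Q_; q_] [:: 0; 1; 0; 2; 2; 1] = nu_qQ * xi_q.
  by apply: (weight_split (negbTE qQ) 0).
have at2' : weight [:: q_; q_; q_; q_; Q_; q_] [:: 0; 1; 0; 2; 2; 1] =
    weight [:: q_; q_; q_; Q_; Q_] [:: 0; 1; 0; 0; 1] * weight [:: q_; q_] [:: 0; 1].
  by apply: (weight_split (negbTE qQ) 2).
have D5 : weight [:: q_; q_; q_; Q_; Q_] [:: 0; 1; 0; 0; 1] = nu_qQ * xi_q.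
  by rewrite -[LHS]mulr1 -(weight_pair [:: q_; q_]) -at2' at0'.
by rewrite [LHS]mulrC -at1 at3 D5 mulrAC.
Qed.

Lemma basic_relations_distinct_faces : basic_relations nu_q xi_q nu_qQ xi_qQ.
Proof.
split.
- by rewrite !expr2 nu_q_idem xi_q_idem.
- by rewrite nu_qQ_nu_q xi_qQ_nu_q mulrC nu_q_xi_q.
- by rewrite !normCK [nu_qQ * _]mulrC [xi_qQ * _]mulrC nu_qQ_unitary xi_qQ_unitary.
- exact: nu_qQ_xi_q.
- exact: nu_qQ_xi_qQ.
Qed.

End DistinctFaces.

Lemma basic_relations_same_faces : q = Q -> basic_relations nu_q xi_q nu_qQ xi_qQ.
Proof.
move=> qQ; have -> : nu_qQ = nu_q.
  rewrite /nu_qQ (weight_word_irrelevant _ [:: q_; q_; q_; q_]) //.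
  by apply: (weight_normal_form (erefl _)).
have -> : xi_qQ = xi_q by exact: weight_word_irrelevant.
split.
- by rewrite !expr2 nu_q_idem xi_q_idem.
- by rewrite nu_q_idem mulrC nu_q_xi_q.
- by split; apply: idem_sqr_norm_mul; rewrite ?nu_q_idem ?xi_q_idem.
- by rewrite nu_q_xi_q xi_q_idem.
- by rewrite -mulrA xi_q_idem.
Qed.

End Weights.

Local Open Scope ring_scope.

Theorem lemma6p7 (F : finType) (alpha : weights F) :
  admissible alpha ->
  forall q Q : F,
    [/\ (* (1) *) nu1 alpha q ^+ 2 = nu1 alpha q /\ xi1 alpha q ^+ 2 = xi1 alpha q,
        (* (2) *) [/\ nu2 alpha q Q * nu1 alpha q = nu2 alpha q Q,
                      xi1 alpha q * nu1 alpha q = xi1 alpha q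
                    & xi2 alpha q Q * nu1 alpha q = xi2 alpha q Q],
        (* (3) *) `|nu2 alpha q Q| ^+ 2 * nu2 alpha q Q = nu2 alpha q Q /\
                  `|xi2 alpha q Q| ^+ 2 * xi2 alpha q Q = xi2 alpha q Q,
        (* (4) *) nu2 alpha q Q * xi1 alpha q = xi2 alpha q Q * xi1 alpha q
      & (* (5) *) nu2 alpha q Q * xi2 alpha q Q = nu2 alpha q Q * xi2 alpha q Q * xi1 alpha q].
Proof.
move=> alpha_adm q Q.
rewrite (nu1E F alpha q Q) (xi1E F alpha q Q) (nu2E F alpha q Q) (xi2E F alpha q Q).
have [qQ|qQ] := eqVneq q Q.
  exact: basic_relations_same_faces.
exact: basic_relations_distinct_faces.
Qed.
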